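(* Let $n\ge2$, let $a=(a_1,\dots,a_n)$ and $b=(b_1,\dots,b_n)$ be real sequences, and let $t=(t_1,\dots,t_n)\in T_a\cap T_b$. Let $p=(p_1,\dots,p_n)\in[0,\infty)^n$ with at least two $p_i$ positive (so that $S_{n,p}(t,t)>0$). Then $$S_{n,p}(a,b)\ge \frac{S_{n,p}(a,t)\,S_{n,p}(b,t)}{S_{n,p}(t,t)}.$$
   Context: For a real sequence $(x_i)$, $\Delta x_i=x_{i+1}-x_i$. ''Increasing'' means strictly increasing. For a real sequence $a=(a_i)_{i=1}^n$, $T_a$ denotes the set of increasing real sequences $(t_i)_{i=1}^n$ such that $(\Delta a_i/\Delta t_i)_{i=1}^{n-1}$ is non-decreasing. For $p\in[0,\infty)^n$ with $P_n=\sum_{i=1}^n p_i>0$ and $x,y\in\mathbb{R}^n$: $M_{n,p}(x)=\frac1{P_n}\sum_{i=1}^n p_ix_i$, $xy=(x_1y_1,\dots,x_ny_n)$, and $S_{n,p}(x,y)=M_{n,p}(xy)-M_{n,p}(x)M_{n,p}(y)$. *)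

From mathcomp Require Import all_boot all_order all_algebra.
Set Implicit Arguments. Unset Strict Implicit. Unset Printing Implicit Defensive.
Import Order.TTheory GRing.Theory Num.Theory.
Local Open Scope ring_scope.

(* Convention: a real sequence (x_1,...,x_n) is represented by a function
   x : nat -> R, using 0-based indices 0,...,n-1 (x_{i+1} in the paper is x i).
   Values outside 0..n-1 are irrelevant. *)

Definition Delta (R : pzRingType) (x : nat -> R) (i : nat) : R := x i.+1 - x i.

Definition increasing_seq (R : realFieldType) (n : nat) (t : nat -> R) : Prop :=
  forall i : nat, (i.+1 < n)%N -> t i < t i.+1.

Definition in_T (R : realFieldType) (n : nat) (a t : nat -> R) : Prop :=
  increasing_seq n t /\
  forall i : nat, (i.+2 < n)%N ->
    Delta a i / Delta t i <= Delta a i.+1 / Delta t i.+1.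

Definition Psum (R : realFieldType) (n : nat) (p : nat -> R) : R :=
  \sum_(i < n) p i.

Definition Mean (R : realFieldType) (n : nat) (p x : nat -> R) : R :=
  (Psum n p)^-1 * \sum_(i < n) p i * x i.

Definition Scov (R : realFieldType) (n : nat) (p x y : nat -> R) : R :=
  Mean n p (fun i => x i * y i) - Mean n p x * Mean n p y.

From mathcomp Require Import all_boot all_order all_algebra.
From mathcomp Require Import ring lra zify.
Import Order.TTheory GRing.Theory Num.Theory.
Set Implicit Arguments. Unset Strict Implicit. Unset Printing Implicit Defensive.
Local Open Scope ring_scope.

(* 1. S is bilinear, symmetric and kills constants, and every sequence is
      x_i = x_0 + sum_k Delta x_k [k < i].  Hence, with the step sequences
      e_k = ([k < i])_i and the "tail masses" F_k = M(e_k),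
        S(x,y) = sum_{k,l} Delta x_k Delta y_l S(e_k,e_l),
        S(e_k,e_l) = (1 - F_{min(k,l)}) F_{max(k,l)}.
   2. Writing r_k = Delta x_k / Delta t_k (the slopes of x against t), this is
      S(x,y) = Q(r^x, r^y) for the bilinear form Q(r,s) = sum r_k s_l w_kl with
      kernel w_kl = Delta t_k Delta t_l S(e_k,e_l); S(x,t) = Q(r^x,1).
   3. Since F is non-increasing in [0,1], w is totally positive of order 2
      (TP2).  A Chebyshev inequality for TP2 kernels and non-decreasing r, s
      gives Q(r,1) Q(1,s) <= Q(1,1) Q(r,s); t in T_a /\ T_b says exactly that
      the slopes of a and b are non-decreasing.
   4. S(t,t) = Q(1,1) > 0 because two weights are positive, and we divide. *)

Lemma ler_sum_term (R : numDomainType) (m : nat) (F : nat -> R) (i : nat) :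
  (forall k, (k < m)%N -> 0 <= F k) -> (i < m)%N -> F i <= \sum_(k < m) F k.
Proof.
move=> F_ge0 lt_im; rewrite (bigD1 (Ordinal lt_im)) //= lerDl.
by apply: sumr_ge0 => k _; exact: F_ge0.
Qed.

(* For an antisymmetric E, sum u_k E_kk' is half of sum (u_k - u_k') E_kk',
   so it is non-negative as soon as every pair k <= k' contributes >= 0. *)
Lemma antisym_sum_ge0 (R : realFieldType) (m : nat) (u : nat -> R)
    (E : nat -> nat -> R) :
  (forall k k', E k' k = - E k k') ->
  (forall k k', (k <= k')%N -> (k' < m)%N -> 0 <= (u k' - u k) * E k' k) ->
  0 <= \sum_(k < m) \sum_(k' < m) u k * E k k'.
Proof.
move=> E_anti E_pair.
set X := \sum_(k < m) \sum_(k' < m) u k * E k k'.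
have twoX : X + X = \sum_(k < m) \sum_(k' < m) (u k - u k') * E k k'.
  rewrite {2}/X exchange_big /= /X -big_split; apply: eq_bigr => k _.
  rewrite -big_split; apply: eq_bigr => k' _ /=; rewrite E_anti; ring.
suff : 0 <= X + X by lra.
rewrite twoX; apply: sumr_ge0 => k _; apply: sumr_ge0 => k' _.
case: (leqP k k') => [le_kk'|lt_k'k]; last exact: E_pair (ltnW lt_k'k) (ltn_ord k).
by rewrite -[E k k']opprK -E_anti mulrN -mulNr opprB E_pair.
Qed.

Definition nondecreasing_on (R : realFieldType) (m : nat) (u : nat -> R) : Prop :=
  forall k k', (k <= k')%N -> (k' < m)%N -> u k <= u k'.

Lemma nondecreasing_onS (R : realFieldType) (m : nat) (u : nat -> R) :
  (forall k, (k.+1 < m)%N -> u k <= u k.+1) -> nondecreasing_on m u.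
Proof.
move=> u_step k k'; elim: k' => [|k' IH] le_kk' lt_k'm.
  by have -> : k = 0%N by lia.
case: (leqP k k') => [le_kk'' | lt_k'k].
  exact: le_trans (IH le_kk'' (ltnW lt_k'm)) (u_step k' lt_k'm).
by have -> : k = k'.+1 by lia.
Qed.

Definition TP2 (R : realFieldType) (m : nat) (w : nat -> nat -> R) : Prop :=
  forall k k' l l', (k <= k')%N -> (l <= l')%N -> (k' < m)%N -> (l' < m)%N ->
    w k' l * w k l' <= w k l * w k' l'.

Definition kform (R : realFieldType) (m : nat) (w : nat -> nat -> R)
    (r s : nat -> R) : R :=
  \sum_(l < m) \sum_(k < m) r k * s l * w k l.

Lemma kform_ext (R : realFieldType) (m : nat) (w : nat -> nat -> R)
    (r r' s s' : nat -> R) :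
  (forall k, (k < m)%N -> r k = r' k) -> (forall l, (l < m)%N -> s l = s' l) ->
  kform m w r s = kform m w r' s'.
Proof.
move=> er es; apply: eq_bigr => l _; apply: eq_bigr => k _.
by rewrite er ?es.
Qed.

Section TP2Chebyshev.
Variables (R : realFieldType) (m : nat) (w : nat -> nat -> R) (r s : nat -> R).
Hypotheses (w_TP2 : TP2 m w) (r_mono : nondecreasing_on m r)
  (s_mono : nondecreasing_on m s).

Let col_r (l : nat) : R := \sum_(k < m) r k * w k l.
Let col (l : nat) : R := \sum_(k < m) w k l.

(* The r-mean col_r l / col l of column l of a TP2 kernel increases with l
   (stated in cross-multiplied form, so no positivity of col is needed). *)
Lemma TP2_column_mean l l' : (l <= l')%N -> (l' < m)%N ->
  col_r l * col l' <= col_r l' * col l.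
Proof.
move=> le_ll' lt_l'm; rewrite -subr_ge0.
have -> : col_r l' * col l - col_r l * col l' = \sum_(k < m) \sum_(k' < m)
    r k * (w k l' * w k' l - w k l * w k' l').
  rewrite /col_r /col !mulr_suml -sumrB; apply: eq_bigr => k _.
  rewrite !mulr_sumr -sumrB; apply: eq_bigr => k' _; ring.
apply: (antisym_sum_ge0 (E := fun k k' => w k l' * w k' l - w k l * w k' l'))
  => [k k' | k k' le_kk' lt_k'm]; first ring.
apply: mulr_ge0; first by rewrite subr_ge0 r_mono.
by rewrite subr_ge0 [X in _ <= X]mulrC w_TP2.
Qed.

Lemma kform_chebyshev :
  kform m w r (fun=> 1) * kform m w (fun=> 1) s
  <= kform m w (fun=> 1) (fun=> 1) * kform m w r s.
Proof.
have expand (f g : nat -> R) :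
    kform m w f g = \sum_(l < m) g l * (\sum_(k < m) f k * w k l).
  by apply: eq_bigr => l _; rewrite mulr_sumr; apply: eq_bigr => k _; ring.
have one_col l : \sum_(k < m) 1 * w k l = col l.
  by apply: eq_bigr => k _; rewrite mul1r.
rewrite !expand -subr_ge0.
under eq_bigr do rewrite mul1r one_col.
under [X in _ - X * _]eq_bigr do rewrite mul1r.
under [X in _ - _ * X]eq_bigr do rewrite one_col.
rewrite (_ : _ - _ = \sum_(l < m) \sum_(l' < m)
                       s l * (col_r l * col l' - col_r l' * col l)); last first.
  rewrite mulrC [X in _ - X]mulrC !mulr_suml -sumrB; apply: eq_bigr => l _.
  rewrite mulr_sumr [X in _ - X]mulr_sumr -sumrB.
  by apply: eq_bigr => l' _; rewrite /col_r; ring.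
apply: (antisym_sum_ge0 (E := fun l l' => col_r l * col l' - col_r l' * col l))
  => [l l' | l l' le_ll' lt_l'm]; first ring.
apply: mulr_ge0; first by rewrite subr_ge0 s_mono.
by rewrite subr_ge0 TP2_column_mean.
Qed.

End TP2Chebyshev.

Lemma mul_minmax (R : realFieldType) (f : nat -> R) (k l : nat) :
  f k * f l = f (minn k l) * f (maxn k l).
Proof. by case: (leqP k l) => // _; rewrite mulrC. Qed.

Lemma TP2_minmax (R : realFieldType) (m : nat) (f g : nat -> R) :
  {homo f : k l / (k <= l)%N >-> k <= l} -> (forall k, 0 <= f k) ->
  {homo g : k l / (k <= l)%N >-> l <= k} -> (forall k, 0 <= g k) ->
  TP2 m (fun k l => f (minn k l) * g (maxn k l)).
Proof.
move=> f_mono f_ge0 g_anti g_ge0 k k' l l' le_kk' le_ll' _ _.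
have f_ineq : f (minn k' l) * f (minn k l') <= f (minn k l) * f (minn k' l').
  rewrite mul_minmax (_ : minn k l = minn (minn k' l) (minn k l')); last by lia.
  by apply: ler_wpM2l => //; apply: f_mono; lia.
have g_ineq : g (maxn k' l) * g (maxn k l') <= g (maxn k l) * g (maxn k' l').
  rewrite mul_minmax (_ : maxn k' l' = maxn (maxn k' l) (maxn k l')); last by lia.
  by apply: ler_wpM2r => //; apply: g_anti; lia.
have := ler_pM (mulr_ge0 (f_ge0 _) (f_ge0 _)) (mulr_ge0 (g_ge0 _) (g_ge0 _))
  f_ineq g_ineq.
by rewrite mulrACA [X in _ <= X -> _]mulrACA [X in _ <= X]mulrACA mulrACA.
Qed.

Lemma TP2_scale (R : realFieldType) (m : nat) (d : nat -> R)
    (w : nat -> nat -> R) :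
  (forall k, (k < m)%N -> 0 <= d k) -> TP2 m w ->
  TP2 m (fun k l => d k * d l * w k l).
Proof.
move=> d_ge0 w_TP2 k k' l l' le_kk' le_ll' lt_k'm lt_l'm.
set c := d k * d k' * d l * d l'.
have -> : d k' * d l * w k' l * (d k * d l' * w k l') = c * (w k' l * w k l').
  by rewrite /c; ring.
have -> : d k * d l * w k l * (d k' * d l' * w k' l') = c * (w k l * w k' l').
  by rewrite /c; ring.
apply: ler_wpM2l; last exact: w_TP2.
by rewrite !mulr_ge0 // d_ge0 //; lia.
Qed.

Section WeightedCovariance.
Variables (R : realFieldType) (n : nat) (p : nat -> R).

Lemma Mean_eq (x y : nat -> R) :
  (forall i, (i < n)%N -> x i = y i) -> Mean n p x = Mean n p y.
Proof.
by move=> exy; rewrite /Mean; congr (_ * _); apply: eq_bigr => i _; rewrite exy.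
Qed.

Lemma Mean_add (x y : nat -> R) :
  Mean n p (fun i => x i + y i) = Mean n p x + Mean n p y.
Proof.
rewrite /Mean -mulrDr -big_split /=; congr (_ * _).
by apply: eq_bigr => i _; rewrite mulrDr.
Qed.

Lemma Mean_scale (c : R) (x : nat -> R) :
  Mean n p (fun i => c * x i) = c * Mean n p x.
Proof.
rewrite /Mean [RHS]mulrCA [c * _]mulr_sumr; congr (_ * _).
by apply: eq_bigr => i _; rewrite mulrCA.
Qed.

Lemma Mean_lincomb (m : nat) (al : nat -> R) (f : nat -> nat -> R) :
  Mean n p (fun i => \sum_(k < m) al k * f k i)
  = \sum_(k < m) al k * Mean n p (f k).
Proof.
rewrite /Mean; under [RHS]eq_bigr do rewrite mulrCA.
rewrite -mulr_sumr; congr (_ * _).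
under [RHS]eq_bigr do rewrite mulr_sumr.
rewrite [RHS]exchange_big /=; apply: eq_bigr => i _.
by rewrite mulr_sumr; apply: eq_bigr => k _; rewrite mulrCA.
Qed.

Lemma Mean_cst (c : R) : Psum n p != 0 -> Mean n p (fun=> c) = c.
Proof.
by move=> P_neq0; rewrite /Mean -mulr_suml mulrA mulVf // mul1r.
Qed.

Lemma Scov_sym (x y : nat -> R) : Scov n p x y = Scov n p y x.
Proof.
rewrite /Scov [Mean n p x * _]mulrC; congr (_ - _).
by apply: Mean_eq => i _; rewrite mulrC.
Qed.

Lemma Scov_eq (x x' y y' : nat -> R) :
  (forall i, (i < n)%N -> x i = x' i) -> (forall i, (i < n)%N -> y i = y' i) ->
  Scov n p x y = Scov n p x' y'.
Proof.
move=> ex ey; rewrite /Scov (Mean_eq ex) (Mean_eq ey); congr (_ - _).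
by apply: Mean_eq => i lt_in; rewrite ex ?ey.
Qed.

Lemma Scov_affine_l (m : nat) (c : R) (al : nat -> R) (f : nat -> nat -> R)
    (y : nat -> R) :
  Psum n p != 0 ->
  Scov n p (fun i => c + \sum_(k < m) al k * f k i) y
  = \sum_(k < m) al k * Scov n p (f k) y.
Proof.
move=> P_neq0; rewrite /Scov.
rewrite (@Mean_eq _ (fun i => c * y i + \sum_(k < m) al k * (f k i * y i)));
  last by move=> i _; rewrite mulrDl mulr_suml; congr (_ + _);
          apply: eq_bigr => k _; rewrite mulrA.
rewrite !Mean_add Mean_cst // Mean_scale.
rewrite (Mean_lincomb m al (fun k i => f k i * y i)) Mean_lincomb.
under [X in _ = X]eq_bigr do rewrite mulrBr [al _ * (Mean _ _ _ * _)]mulrA.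
by rewrite sumrB -mulr_suml; ring.
Qed.

Definition step (k i : nat) : R := ((k < i)%N)%:R.

Lemma step_decomposition (x : nat -> R) (i : nat) :
  (i < n)%N -> x i = x 0%N + \sum_(k < n.-1) Delta x k * step k i.
Proof.
move=> lt_in; rewrite -(big_mkord xpredT (fun k => Delta x k * step k i)).
rewrite (big_cat_nat _ (n := i)) //=; last by lia.
rewrite [X in _ + (_ + X)]big1_seq ?addr0; last first.
  move=> k /andP [_]; rewrite mem_index_iota => /andP [le_ik _].
  by rewrite /step ltnNge le_ik mulr0.
rewrite (eq_big_seq (fun k => x k.+1 - x k)); last first.
  by move=> k; rewrite mem_index_iota => /andP [_ lt_ki]; rewrite /step lt_ki mulr1.
by rewrite telescope_sumr // addrC subrK.
Qed.

Lemma Scov_step_expansion (x y : nat -> R) :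
  Psum n p != 0 ->
  Scov n p x y = \sum_(k < n.-1) \sum_(l < n.-1)
    Delta x k * Delta y l * Scov n p (step k) (step l).
Proof.
move=> P_neq0; rewrite (Scov_eq (step_decomposition x) (step_decomposition y)).
rewrite Scov_affine_l //; apply: eq_bigr => k _.
rewrite Scov_sym Scov_affine_l // mulr_sumr; apply: eq_bigr => l _.
by rewrite Scov_sym mulrA.
Qed.

Definition tail_mass (k : nat) : R := Mean n p (step k).

(* Two steps have covariance S(e_k,e_l) = (1 - F_min(k,l)) F_max(k,l),
   since e_k e_l = e_max(k,l). *)
Lemma Scov_step (k l : nat) :
  Scov n p (step k) (step l)
  = (1 - tail_mass (minn k l)) * tail_mass (maxn k l).
Proof.
rewrite /Scov (mul_minmax (fun k => Mean n p (step k))).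
rewrite (@Mean_eq _ (step (maxn k l))); first by rewrite /tail_mass; ring.
by move=> i _; rewrite /step -natrM mulnb gtn_max.
Qed.

Hypothesis p_ge0 : forall i, (i < n)%N -> 0 <= p i.

Lemma tail_mass_ge0 (k : nat) : 0 <= tail_mass k.
Proof.
rewrite /tail_mass /Mean mulr_ge0 //.
  by rewrite invr_ge0 sumr_ge0 // => i _; exact: p_ge0.
by apply: sumr_ge0 => i _; rewrite mulr_ge0 ?p_ge0 // /step ler0n.
Qed.

Hypothesis P_gt0 : 0 < Psum n p.

Lemma tail_mass_le1 (k : nat) : tail_mass k <= 1.
Proof.
rewrite /tail_mass /Mean -(mulVf (lt0r_neq0 P_gt0)) ler_pM2l ?invr_gt0 //.
apply: ler_sum => i _; rewrite ler_piMr ?p_ge0 //.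
by rewrite /step lern1 leq_b1.
Qed.

Lemma tail_mass_antitone : {homo tail_mass : k k' / (k <= k')%N >-> k' <= k}.
Proof.
move=> k k' le_kk'; rewrite /tail_mass /Mean ler_pM2l ?invr_gt0 //.
apply: ler_sum => i _; rewrite ler_wpM2l ?p_ge0 // /step ler_nat.
by case: (boolP (k' < i)%N) => //= lt_k'i; rewrite (leq_ltn_trans le_kk' lt_k'i).
Qed.

Lemma tail_mass_strict (i j : nat) :
  (i < j)%N -> (j < n)%N -> 0 < p i -> 0 < p j ->
  0 < tail_mass i < 1.
Proof.
move=> lt_ij lt_jn p_i p_j; rewrite /tail_mass /Mean.
have inv_P : 0 < (Psum n p)^-1 by rewrite invr_gt0.
apply/andP; split.
  rewrite mulr_gt0 //; apply: lt_le_trans p_j _.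
  have -> : p j = p j * step i j by rewrite /step lt_ij mulr1.
  apply: (ler_sum_term (F := fun k => p k * step i k)) => // k lt_kn.
  by rewrite mulr_ge0 ?p_ge0 // /step ler0n.
rewrite -(mulVf (lt0r_neq0 P_gt0)) ltr_pM2l // -subr_gt0 /Psum -sumrB.
apply: lt_le_trans p_i _.
have -> : p i = p i - p i * step i i by rewrite /step ltnn mulr0 subr0.
apply: (ler_sum_term (F := fun k => p k - p k * step i k)); last by lia.
move=> k lt_kn; rewrite subr_ge0 ler_piMr ?p_ge0 //.
by rewrite /step lern1 leq_b1.
Qed.

End WeightedCovariance.

(* The slopes Delta x_k / Delta t_k of x against t; x is "convex against t",
   i.e. t in T_x, exactly when these slopes are non-decreasing. *)
Definition slope (R : realFieldType) (x t : nat -> R) (k : nat) : R :=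
  Delta x k / Delta t k.

Section StepKernel.
Variables (R : realFieldType) (n : nat) (p t : nat -> R).
Hypothesis t_incr : increasing_seq n t.

Lemma Delta_gt0 (k : nat) : (k < n.-1)%N -> 0 < Delta t k.
Proof. by move=> lt_kn; rewrite /Delta subr_gt0 t_incr //; lia. Qed.

Lemma slope_self (k : nat) : (k < n.-1)%N -> slope t t k = 1.
Proof. by move=> lt_kn; rewrite /slope divff // lt0r_neq0 // Delta_gt0. Qed.

Definition step_kernel (k l : nat) : R :=
  Delta t k * Delta t l * Scov n p (step R k) (step R l).

Lemma Scov_kform (x y : nat -> R) :
  Psum n p != 0 ->
  Scov n p x y = kform n.-1 step_kernel (slope x t) (slope y t).
Proof.
move=> P_neq0; rewrite Scov_step_expansion // exchange_big.
apply: eq_bigr => l _; apply: eq_bigr => k _.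
have dk := lt0r_neq0 (Delta_gt0 (ltn_ord k)).
have dl := lt0r_neq0 (Delta_gt0 (ltn_ord l)).
by rewrite /slope /step_kernel; field; rewrite dk dl.
Qed.

Hypothesis p_ge0 : forall i, (i < n)%N -> 0 <= p i.
Hypothesis P_gt0 : 0 < Psum n p.

(* w is TP2: it is the kernel (1 - F_min) F_max rescaled by the gaps of t. *)
Lemma step_kernel_TP2 : TP2 n.-1 step_kernel.
Proof.
have F_anti := tail_mass_antitone p_ge0 P_gt0.
have coF_mono : {homo (fun k => 1 - tail_mass n p k) : k k' / (k <= k')%N >-> k <= k'}.
  by move=> k k' le_kk'; rewrite lerB // F_anti.
have coF_ge0 k : 0 <= 1 - tail_mass n p k by rewrite subr_ge0 tail_mass_le1.
have := TP2_scale (fun k lt_kn => ltW (Delta_gt0 lt_kn))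
  (TP2_minmax (m := n.-1) coF_mono coF_ge0 F_anti (tail_mass_ge0 p_ge0)).
by move=> K_TP2 k k' l l' *; rewrite /step_kernel !Scov_step; apply: K_TP2.
Qed.

(* With two positive weights, t has positive variance: the kernel is
   non-negative and its diagonal entry at the first of them is positive. *)
Lemma Scov_self_gt0 (i j : nat) :
  (i < j)%N -> (j < n)%N -> 0 < p i -> 0 < p j -> 0 < Scov n p t t.
Proof.
move=> lt_ij lt_jn p_i p_j; have lt_im : (i < n.-1)%N by lia.
rewrite Scov_kform ?lt0r_neq0 // (kform_ext _ slope_self slope_self).
have w_ge0 k l : (k < n.-1)%N -> (l < n.-1)%N -> 0 <= 1 * 1 * step_kernel k l.
  move=> lt_km lt_lm; rewrite !mul1r /step_kernel Scov_step.
  apply: mulr_ge0; first by rewrite mulr_ge0 // ltW // Delta_gt0.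
  by rewrite mulr_ge0 ?tail_mass_ge0 // subr_ge0 tail_mass_le1.
have w_ii : 0 < 1 * 1 * step_kernel i i.
  have /andP [F_gt0 F_lt1] := tail_mass_strict p_ge0 P_gt0 lt_ij lt_jn p_i p_j.
  rewrite !mul1r /step_kernel Scov_step minnn maxnn.
  by apply: mulr_gt0; [rewrite mulr_gt0 ?Delta_gt0 | rewrite mulr_gt0 // subr_gt0].
apply: (lt_le_trans w_ii); rewrite /kform.
apply: le_trans (ler_sum_term
  (F := fun l => \sum_(k < n.-1) 1 * 1 * step_kernel k l) _ lt_im).
  apply: (ler_sum_term (F := fun k => 1 * 1 * step_kernel k i)) => //.
  by move=> k lt_km; exact: w_ge0.
by move=> l lt_lm; apply: sumr_ge0 => k _; exact: w_ge0.
Qed.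
End StepKernel.

Theorem theorem4p1 (R : realFieldType) (n : nat) (a b t p : nat -> R) :
  (2 <= n)%N ->
  in_T n a t -> in_T n b t ->
  (forall i : nat, (i < n)%N -> 0 <= p i) ->
  (exists i j : nat, [/\ (i < n)%N, (j < n)%N, i <> j, 0 < p i & 0 < p j]) ->
  Scov n p a b >= Scov n p a t * Scov n p b t / Scov n p t t.
Proof.
move=> _ [t_incr a_convex] [_ b_convex] p_ge0 [i [j [lt_in lt_jn neq_ij p_i p_j]]].
have [i' [j' [lt_ij lt_jn' p_i' p_j']]] :
    exists i' j', [/\ (i' < j')%N, (j' < n)%N, 0 < p i' & 0 < p j'].
  by case: (ltngtP i j) => [lt_ij | lt_ji | eq_ij]; [exists i, j | exists j, i | ].
have P_gt0 : 0 < Psum n p.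
  exact: lt_le_trans p_i (ler_sum_term p_ge0 lt_in).
have Stt_gt0 := Scov_self_gt0 t_incr p_ge0 P_gt0 lt_ij lt_jn' p_i' p_j'.
set Q := kform n.-1 (step_kernel n p t).
have S_Q x y : Scov n p x y = Q (slope x t) (slope y t).
  exact: Scov_kform t_incr x y (lt0r_neq0 P_gt0).
have unit_slope := slope_self t_incr.
have Q_r1 r : Q r (slope t t) = Q r (fun=> 1) := kform_ext _ (fun _ _ => erefl) unit_slope.
have Q_1s s : Q (slope t t) s = Q (fun=> 1) s := kform_ext _ unit_slope (fun _ _ => erefl).
rewrite ler_pdivrMr // [Scov n p b t]Scov_sym !S_Q !Q_r1 !Q_1s [X in _ <= X]mulrC.
apply: kform_chebyshev; first exact: step_kernel_TP2.
  by apply: nondecreasing_onS => k lt_km; apply: a_convex; lia.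
by apply: nondecreasing_onS => k lt_km; apply: b_convex; lia.
Qed.
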